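(* Let $k$ and $m$ be positive integers. Then \[ E^{(k)}_{2m}\!\left(\tfrac12,\ldots,\tfrac12,\tfrac{k+1}{2}\right)=\sum_{i=0}^{\lfloor k/2\rfloor}\binom{k}{2i}\sum_{j=0}^i\binom{i}{j}(-1)^j E^{(2j)}_{2m}\!\left(\tfrac12,\ldots,\tfrac12\right), \] and \[ E^{(k)}_{2m+1}\!\left(\tfrac12,\ldots,\tfrac12,\tfrac{k+1}{2}\right)=\sum_{i=0}^{\lfloor k/2\rfloor}\binom{k}{2i+1}\sum_{j=0}^i\binom{i}{j}(-1)^{j} E^{(2j+1)}_{2m+1}\!\left(\tfrac12,\ldots,\tfrac12,1\right). \] Here on the left there are $k-1$ arguments equal to $\tfrac12$ followed by $\tfrac{k+1}{2}$; $E^{(2j)}_{2m}(\tfrac12,\ldots,\tfrac12)$ has all $2j$ arguments equal to $\tfrac12$; and $E^{(2j+1)}_{2m+1}(\tfrac12,\ldots,\tfrac12,1)$ has $2j$ arguments equal to $\tfrac12$ followed by $1$.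
   Context: The Euler polynomials $E_n(x)$ are defined by $\sum_{n\ge0}E_n(x)\frac{t^n}{n!}=\frac{2e^{xt}}{e^t+1}$. For $r\ge 0$ and $m\ge 0$, $E^{(r)}_m(x_1,\ldots,x_r)=\sum_{i_1+\cdots+i_r=m}\binom{m}{i_1,\ldots,i_r}E_{i_1}(x_1)\cdots E_{i_r}(x_r)$, the sum over nonnegative integers $i_1,\dots,i_r$; for $r=0$ this is the empty-product convention $E^{(0)}_m=1$ if $m=0$ and $0$ otherwise. *)

From mathcomp Require Import all_boot all_order all_algebra.
Set Implicit Arguments. Unset Strict Implicit. Unset Printing Implicit Defensive.
Import Order.TTheory GRing.Theory Num.Theory.
Local Open Scope ring_scope.

(* The generating function
   identity  (e^t + 1) * sum_n E_n(x) t^n/n! = 2 e^{xt}  is, coefficientwise,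
   sum_{k<=n} C(n,k) E_k(x) + E_n(x) = 2 x^n, i.e.
   E_n(x) = x^n - 1/2 * sum_{k<n} C(n,k) E_k(x).
   euler_seq n x = [:: E_0(x); ...; E_n(x)]. *)
Fixpoint euler_seq (n : nat) (x : rat) : seq rat :=
  match n with
  | 0 => [:: 1]
  | n'.+1 =>
      let s := euler_seq n' x in
      rcons s (x ^+ n'.+1 - 2^-1 * \sum_(k < n'.+1) ('C(n'.+1, k))%:R * nth 0 s k)
  end.

Definition euler (n : nat) (x : rat) : rat := nth 0 (euler_seq n x) n.

Definition eulerM (r m : nat) (x : 'I_r -> rat) : rat :=
  \sum_(i : {ffun 'I_r -> 'I_m.+1} | (\sum_(l < r) (i l : nat))%N == m)
    ((m`!)%:R / (\prod_(l < r) ((i l : nat)`!)%:R)) *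
    \prod_(l < r) euler (i l) (x l).

From mathcomp Require Import all_boot all_order all_algebra.
From mathcomp Require Import ring zify.
Set Implicit Arguments. Unset Strict Implicit.
Import Order.TTheory GRing.Theory Num.Theory.
Local Open Scope ring_scope.

(* Work with exponential generating functions in t, truncated at order N.
   With C = 2 cosh (t/2) and S = 2 sinh (t/2), the generating function
   2 e^{xt} / (e^t + 1) of the E_n(x) is 2 e^{(x - 1/2) t} / C, so
   C E(1/2) = 2, C E(1) = C + S and C E((k+1)/2) = 2 e^{kt/2}; hence C^k times
   the generating function of the left-hand side is (C + S)^k.  Split the
   binomial expansion as (C + S)^k = P + S Q with P and Q even in S.  Since
   C^2 - S^2 = 4 gives C^2 (1 - E(1/2)^2) = S^2, C^k times the generating
   function of the right-hand side is P, resp. (C + S) Q.  So C^k (left - right)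
   is S Q, resp. P - C Q, which is odd, resp. even, in t; as C is even with
   C(0) = 2, so is left - right, and its coefficient of t^{2m}, resp.
   t^{2m+1}, vanishes. *)

Section Truncation.
Variables (R : comNzRingType) (N : nat).
Implicit Types p q : {poly R}.

Lemma take_polyMl p q : take_poly N (take_poly N p * q) = take_poly N (p * q).
Proof.
rewrite -{2}[p](poly_take_drop N) mulrDl mulrAC take_polyD.
by rewrite take_polyMXn_0 addr0.
Qed.

Lemma take_polyMr p q : take_poly N (p * take_poly N q) = take_poly N (p * q).
Proof. by rewrite mulrC take_polyMl mulrC. Qed.

Lemma eq_take_polyM p p' q q' :
  take_poly N p = take_poly N p' -> take_poly N q = take_poly N q' ->
  take_poly N (p * q) = take_poly N (p' * q').
Proof.
by move=> ep eq; rewrite -take_polyMl ep take_polyMl -take_polyMr eq take_polyMr.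
Qed.

Lemma eq_take_polyX p q n : take_poly N p = take_poly N q ->
  take_poly N (p ^+ n) = take_poly N (q ^+ n).
Proof.
move=> epq; elim: n => [|n IHn]; first by rewrite !expr0.
by rewrite !exprS; apply: eq_take_polyM.
Qed.

Lemma coef_comp_polyNX p n : (p \Po - 'X)`_n = (-1) ^+ n * p`_n.
Proof.
rewrite comp_polyE.
under eq_bigr do rewrite -scaleN1r exprZn scalerA mulrC.
rewrite -(poly_def (size p) (fun i => (-1) ^+ i * p`_i)) coef_poly.
by case: ltnP => // le_pn; rewrite nth_default ?mulr0.
Qed.

Lemma take_poly_comp_polyNX p :
  take_poly N (p \Po - 'X) = take_poly N p \Po - 'X.
Proof.
apply/polyP => n; rewrite coef_comp_polyNX !coef_take_poly coef_comp_polyNX.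
by case: ifP; rewrite ?mulr0.
Qed.
End Truncation.

Section TruncationCancel.
Variables (F : fieldType) (N : nat).
Implicit Types c p q : {poly F}.

Lemma take_poly_eq0 p : (take_poly N p == 0) = ('X^N %| p).
Proof.
apply/eqP/idP => [p_lo0 | /dvdpP[q ->]]; last exact: take_polyMXn_0.
by rewrite -(poly_take_drop N p) p_lo0 add0r dvdp_mull.
Qed.

Lemma take_poly_mulfI c p q : c.[0] != 0 ->
  take_poly N (c * p) = take_poly N (c * q) -> take_poly N p = take_poly N q.
Proof.
move=> c0 /eqP; rewrite -subr_eq0 -!linearB /= -mulrBr take_poly_eq0.
rewrite Gauss_dvdpr => [p_q|].
  by apply/eqP; rewrite -subr_eq0 -linearB take_poly_eq0.
rewrite coprimep_expl // coprimep_sym -[X in coprimep _ X]subr0 -polyC0.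
by rewrite coprimep_XsubC rootE.
Qed.

Lemma parity_coef_eq0 (s : bool) c p q n : 2 != 0 :> F ->
  c \Po - 'X = c -> c.[0] != 0 -> q \Po - 'X = (-1) ^+ s *: q ->
  take_poly N (c * p) = take_poly N q -> (n < N)%N -> odd n = ~~ s -> p`_n = 0.
Proof.
move=> two_neq0 c_even c0 q_par cp_q ltnN n_s.
have p_par : take_poly N (p \Po - 'X) = take_poly N ((-1) ^+ s *: p).
  apply: (take_poly_mulfI c0).
  rewrite -{1}c_even -comp_polyM take_poly_comp_polyNX cp_q -take_poly_comp_polyNX.
  by rewrite q_par -scalerAr !take_polyZ cp_q.
have /eqP := congr1 (fun r : {poly F} => r`_n) p_par.
rewrite !coef_take_poly ltnN coef_comp_polyNX coefZ -signr_odd.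
rewrite n_s signrN mulNr -subr_eq0 -opprD oppr_eq0 -mulr2n -mulr_natl.
by rewrite !mulf_eq0 signr_eq0 (negPf two_neq0) => /eqP.
Qed.
End TruncationCancel.

Section BinomialSums.
Variable R : comPzRingType.
Implicit Types (a b y z : R) (c : nat -> nat).

Lemma big_nat_double (F : nat -> R) n :
  \sum_(0 <= i < 2 * n) F i = \sum_(0 <= i < n) (F (2 * i)%N + F (2 * i).+1).
Proof.
elim: n => [|n IHn]; first by rewrite muln0 !big_geq.
by rewrite mulnSr addn2 !big_nat_recr //= IHn addrA.
Qed.

Definition binom_part d k a b := \sum_(0 <= i < k./2.+1)
  ('C(k, 2 * i + d))%:R * (a ^+ (k - (2 * i + d)) * (b ^+ 2) ^+ i).

Lemma binom_partN d k a b : binom_part d k a (- b) = binom_part d k a b.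
Proof. by apply: eq_bigr => i _; rewrite sqrrN. Qed.

Lemma exprD_binom_part k a b :
  (a + b) ^+ k = binom_part 0 k a b + b * binom_part 1 k a b.
Proof.
pose t i := (a ^+ (k - i) * b ^+ i) *+ 'C(k, i).
have -> : (a + b) ^+ k = \sum_(0 <= i < 2 * k./2.+1) t i.
  rewrite exprDn -(big_mkord xpredT t) [RHS](big_cat_nat _ (n := k.+1)) //=.
    rewrite [X in _ = _ + X]big_nat_cond [X in _ = _ + X]big1 ?addr0 // => i.
    by case/andP=> /andP[lt_ki _] _; rewrite /t bin_small.
  by move: (odd_double_half k) (leq_b1 (odd k)); rewrite -mul2n; lia.
rewrite big_nat_double big_split /= mulr_sumr; congr (_ + _); apply: eq_bigr => i _.
  by rewrite /t addn0 exprM -mulr_natl.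
by rewrite /t addn1 exprSr exprM -mulr_natl; ring.
Qed.

Lemma expr1Bn y n :
  (1 - y) ^+ n = \sum_(0 <= j < n.+1) ('C(n, j))%:R * (-1) ^+ j * y ^+ j.
Proof.
rewrite exprBn big_mkord; apply: eq_bigr => j _.
by rewrite expr1n mulr1 -mulr_natl mulrA.
Qed.

Definition binom_comb k c (P : nat -> R) := \sum_(0 <= i < k./2.+1)
  (c i)%:R * \sum_(0 <= j < i.+1) ('C(i, j))%:R * (-1) ^+ j * P j.

Lemma binom_comb_sqr k c y : binom_comb k c (fun j => y ^+ (2 * j)) =
  \sum_(0 <= i < k./2.+1) (c i)%:R * (1 - y ^+ 2) ^+ i.
Proof. by apply: eq_bigr => i _; rewrite expr1Bn; under eq_bigr do rewrite exprM. Qed.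

Lemma binom_combMr k c P z :
  binom_comb k c (fun j => P j * z) = binom_comb k c P * z.
Proof.
rewrite /binom_comb mulr_suml; apply: eq_bigr => i _.
by rewrite -mulrA mulr_suml; congr (_ * _); apply: eq_bigr => j _; rewrite mulrA.
Qed.

End BinomialSums.

Lemma rmorph_binom_part (R S : comPzRingType) (f : {rmorphism R -> S}) d k a b :
  f (binom_part d k a b) = binom_part d k (f a) (f b).
Proof.
rewrite rmorph_sum; apply: eq_bigr => i _.
by rewrite rmorphM rmorph_nat rmorphM !rmorphXn.
Qed.

Lemma binom_comb_coef (R : comNzRingType) k c (P : nat -> {poly R}) Q x n :
  (forall j, Q j = x * (P j)`_n) -> x * (binom_comb k c P)`_n = binom_comb k c Q.
Proof.
move=> PQ; rewrite coef_sum mulr_sumr; apply: eq_bigr => i _.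
rewrite -polyC_natr coefCM mulrCA; congr (_ * _); rewrite coef_sum mulr_sumr.
apply: eq_bigr => j _; rewrite PQ -(rmorph_sign polyC) -polyC_natr -polyCM coefCM; ring.
Qed.

Lemma big_ord_last_if (T : Type) (R : comPzSemiRingType) (f : T -> R) n a b :
  \prod_(l < n.+1) f (if val l == n then a else b) = f b ^+ n * f a.
Proof.
rewrite big_ord_recr /= eqxx -[in RHS](card_ord n) -prodr_const.
by congr (_ * _); apply: eq_bigr => l _; rewrite ltn_eqF.
Qed.

Section ExponentialGF.
Variables (F : fieldType) (N : nat).
Hypothesis F_char0 : [pchar F] =i pred0.
Implicit Types (f g : nat -> F) (x y : F).

Definition egf f : {poly F} := \poly_(n < N) (f n / (n`!)%:R).

Definition expx x := egf (fun n => x ^+ n).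

Lemma coef_egf f n : (egf f)`_n = if (n < N)%N then f n / (n`!)%:R else 0.
Proof. exact: coef_poly. Qed.

Lemma take_poly_egf f : take_poly N (egf f) = egf f.
Proof. by rewrite take_poly_id // size_poly. Qed.

Lemma pnatf_neq0 n : (0 < n)%N -> n%:R != 0 :> F.
Proof. by move/pcharf0P: F_char0 ->; rewrite -lt0n. Qed.

Lemma coef_egfM f g n : (n < N)%N ->
  (egf f * egf g)`_n =
  (\sum_(i < n.+1) ('C(n, i))%:R * f i * g (n - i)%N) / (n`!)%:R.
Proof.
move=> ltnN; rewrite coefM mulr_suml; apply: eq_bigr => i _.
have le_in : (i <= n)%N by rewrite -ltnS.
rewrite !coef_egf (leq_ltn_trans le_in ltnN) (leq_ltn_trans (leq_subr i n) ltnN).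
rewrite -(bin_fact le_in) !natrM.
by field; rewrite !pnatf_neq0 ?fact_gt0 ?bin_gt0.
Qed.

Lemma take_poly_expxM x y : take_poly N (expx x * expx y) = expx (x + y).
Proof.
apply/polyP => n; rewrite coef_take_poly coef_egf; case: ltnP => // ltnN.
rewrite coef_egfM // addrC exprDn; congr (_ / _).
by apply: eq_bigr => i _; rewrite -mulr_natl; ring.
Qed.

Lemma expx0 : expx 0 = take_poly N 1.
Proof.
apply/polyP => n; rewrite coef_take_poly coef_egf coef1; case: ltnP => // _.
by case: n => [|n]; rewrite ?expr0 ?divr1 // expr0n mul0r.
Qed.

Lemma take_poly_expxX x k : take_poly N (expx x ^+ k) = expx (k%:R * x).
Proof.
elim: k => [|k IHk]; first by rewrite expr0 mul0r expx0.
by rewrite exprS -take_polyMr IHk take_poly_expxM mulrSr mulrDl mul1r addrC.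
Qed.

Lemma expx_comp_polyNX x : expx x \Po - 'X = expx (- x).
Proof.
apply/polyP => n; rewrite coef_comp_polyNX !coef_egf.
by case: (n < N)%N; rewrite /= ?mulr0 // mulrA -exprMn mulN1r.
Qed.

End ExponentialGF.

Lemma size_euler_seq n x : size (euler_seq n x) = n.+1.
Proof. by elim: n => [|n IHn] //=; rewrite size_rcons IHn. Qed.

Lemma nth_euler_seq n x k : (k <= n)%N -> nth 0 (euler_seq n x) k = euler k x.
Proof.
elim: n k => [|n IHn] k; first by rewrite leqn0 => /eqP ->.
rewrite leq_eqVlt => /orP[/eqP -> //| lt_kn].
by rewrite /= nth_rcons size_euler_seq lt_kn; apply: IHn.
Qed.

Lemma euler_rec n x :
  \sum_(k < n.+1) ('C(n, k))%:R * euler k x + euler n x = 2 * x ^+ n.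
Proof.
case: n => [|n]; first by rewrite big_ord1 /euler /= bin0 mul1r expr0 mulr1.
rewrite big_ord_recr /= binn mul1r.
have -> : euler n.+1 x =
    x ^+ n.+1 - 2^-1 * \sum_(k < n.+1) ('C(n.+1, k))%:R * euler k x.
  rewrite {1}/euler /= nth_rcons size_euler_seq ltnn eqxx.
  by congr (_ - _ * _); apply: eq_bigr => i _; rewrite nth_euler_seq // -ltnS.
by set S := \sum_(_ < _) _; field.
Qed.

Lemma prodr_scaleXn (R : comNzRingType) (I : finType) (c : I -> R) (e : I -> nat) :
  \prod_i (c i *: 'X^(e i)) = (\prod_i c i) *: 'X^(\sum_i e i).
Proof.
under eq_bigr do rewrite -mul_polyC.
by rewrite big_split /= -rmorph_prod prodrXr mul_polyC.
Qed.

Definition euler_egf N x := egf N (fun n => euler n x).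

Lemma eulerM_coef r n (x : 'I_r -> rat) :
  eulerM n x = (n`!)%:R * (\prod_(l < r) euler_egf n.+1 (x l))`_n.
Proof.
have egfE l : euler_egf n.+1 (x l) =
    \sum_(j < n.+1) (euler j (x l) / (j`!)%:R) *: 'X^j.
  by rewrite /euler_egf /egf poly_def.
rewrite (eq_bigr _ (fun l _ => egfE l)) bigA_distr_bigA /= coef_sum.
rewrite /eulerM big_mkcond /= mulr_sumr; apply: eq_bigr => f _.
rewrite prodr_scaleXn coefZ coefXn prodf_div eq_sym.
by case: eqP => _; rewrite ?mulr0 ?if_same //=; ring.
Qed.

Section EulerGF.
Variable N : nat.
Let rat_char0 : [pchar rat] =i pred0 := pchar_num rat.
Local Notation h := (2^-1 : rat).
Local Notation u := (euler_egf N h).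

Definition ch := expx N h + expx N (- h).
Definition sh := expx N h - expx N (- h).

Lemma ch_comp_polyNX : ch \Po - 'X = ch.
Proof. by rewrite rmorphD /= !expx_comp_polyNX opprK addrC. Qed.

Lemma sh_comp_polyNX : sh \Po - 'X = - sh.
Proof. by rewrite rmorphB /= !expx_comp_polyNX opprK opprB. Qed.

Lemma horner_ch0 : (0 < N)%N -> ch.[0] != 0.
Proof. by move=> N_gt0; rewrite horner_coef0 coefD !coef_egf N_gt0 !expr0 divr1. Qed.

Lemma take_poly_euler_egf x :
  take_poly N ((expx N 1 + 1) * euler_egf N x) = 2%:P * expx N x.
Proof.
apply/polyP => n; rewrite coef_take_poly coefCM coef_egf.
case: ltnP => lt_nN; last by rewrite mulr0.
rewrite mulrDl mul1r coefD mulrC coef_egfM // coef_egf lt_nN.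
under eq_bigr do rewrite expr1n mulr1.
by rewrite -mulrDl euler_rec mulrA.
Qed.

Lemma take_poly_ch_euler x :
  take_poly N (ch * euler_egf N x) = take_poly N (2%:P * expx N (x - h)).
Proof.
have chE : take_poly N (expx N (- h) * (expx N 1 + 1)) = ch.
  rewrite mulrDr mulr1 take_polyD take_poly_expxM // take_poly_egf.
  by congr (expx N _ + _); field.
rewrite -chE take_polyMl -mulrA -take_polyMr take_poly_euler_egf mulrCA.
by rewrite -take_polyMr take_poly_expxM // addrC.
Qed.

Lemma take_poly_ch_euler_half : take_poly N (ch * u) = take_poly N 2%:P.
Proof. by rewrite take_poly_ch_euler subrr expx0 take_polyMr mulr1. Qed.

Lemma ch_add_sh : ch + sh = 2%:P * expx N h.
Proof. by rewrite /ch /sh polyC_natr; ring. Qed.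

Lemma take_poly_ch_euler1 : take_poly N (ch * euler_egf N 1) = take_poly N (ch + sh).
Proof.
by rewrite take_poly_ch_euler ch_add_sh; congr (take_poly N (_ * expx N _)); field.
Qed.

Lemma take_poly_ch_euler_shift k :
  take_poly N (ch * euler_egf N ((k%:R + 1) / 2)) =
  take_poly N (2%:P * expx N h ^+ k).
Proof.
rewrite take_poly_ch_euler -[RHS]take_polyMr take_poly_expxX //.
by congr (take_poly N (_ * expx N _)); field.
Qed.

Lemma take_poly_ch_sqr_euler_half :
  take_poly N (ch ^+ 2 * (1 - u ^+ 2)) = take_poly N (sh ^+ 2).
Proof.
have sh2E : sh ^+ 2 = ch ^+ 2 - 4%:P * (expx N h * expx N (- h)).
  by rewrite /ch /sh polyC_natr; ring.
have -> : ch ^+ 2 * (1 - u ^+ 2) = ch ^+ 2 - (ch * u) ^+ 2 by ring.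
rewrite sh2E !linearB /=; congr (_ - _).
rewrite (eq_take_polyX 2 take_poly_ch_euler_half).
rewrite -[RHS]take_polyMr take_poly_expxM // subrr expx0 take_polyMr mulr1.
by rewrite -rmorphXn.
Qed.

Lemma take_poly_ch_euler_prod k :
  take_poly N (ch ^+ k.+1 * (u ^+ k * euler_egf N ((k.+1%:R + 1) / 2))) =
  take_poly N ((ch + sh) ^+ k.+1).
Proof.
set e := euler_egf N ((k.+1%:R + 1) / 2).
have -> : ch ^+ k.+1 * (u ^+ k * e) = (ch * u) ^+ k * (ch * e).
  by rewrite exprMn exprS; ring.
rewrite (eq_take_polyM (eq_take_polyX k take_poly_ch_euler_half)
  (take_poly_ch_euler_shift k.+1)) ch_add_sh.
by congr (take_poly N _); rewrite !exprS exprMn; ring.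
Qed.

Lemma take_poly_ch_sub_sqr k i : (2 * i <= k)%N ->
  take_poly N (ch ^+ k * (1 - u ^+ 2) ^+ i) =
  take_poly N (ch ^+ (k - 2 * i) * (sh ^+ 2) ^+ i).
Proof.
move=> le_2ik; rewrite -{1}(subnK le_2ik) exprD exprM -mulrA -exprMn.
by apply: eq_take_polyM => //; apply: eq_take_polyX; apply: take_poly_ch_sqr_euler_half.
Qed.

Lemma take_poly_ch_binom_even k :
  take_poly N (ch ^+ k * binom_comb k (fun i => 'C(k, 2 * i)) (fun j => u ^+ (2 * j))) =
  take_poly N (binom_part 0 k ch sh).
Proof.
rewrite binom_comb_sqr mulr_sumr !take_poly_sum; apply: eq_big_nat => i /andP[_ le_ik].
rewrite mulrCA -take_polyMr take_poly_ch_sub_sqr ?take_polyMr ?addn0 //.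
by rewrite mul2n -geq_half_double -ltnS.
Qed.

Lemma take_poly_ch_binom_odd k :
  take_poly N (ch ^+ k * binom_comb k (fun i => 'C(k, (2 * i).+1))
                                   (fun j => u ^+ (2 * j) * euler_egf N 1)) =
  take_poly N ((ch + sh) * binom_part 1 k ch sh).
Proof.
rewrite binom_combMr binom_comb_sqr mulr_suml !mulr_sumr !take_poly_sum.
apply: eq_big_nat => i _; rewrite addn1.
have [le_ik | lt_ki] := leqP (2 * i).+1 k; last by rewrite bin_small // !(mul0r, mulr0).
have -> : ch ^+ k * ('C(k, (2 * i).+1)%:R * (1 - u ^+ 2) ^+ i * euler_egf N 1) =
    'C(k, (2 * i).+1)%:R * ((ch ^+ k.-1 * (1 - u ^+ 2) ^+ i) * (ch * euler_egf N 1)).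
  by rewrite -{1}(prednK (leq_ltn_trans (leq0n _) le_ik)) exprS; ring.
rewrite (eq_take_polyM (erefl (take_poly N _)) (eq_take_polyM
  (take_poly_ch_sub_sqr _) take_poly_ch_euler1)); last by lia.
congr (take_poly N _); have -> : (k.-1 - 2 * i = k - (2 * i).+1)%N by lia.
ring.
Qed.

Lemma chX_comp_polyNX k : ch ^+ k \Po - 'X = ch ^+ k.
Proof. by rewrite rmorphXn /= ch_comp_polyNX. Qed.

Lemma horner_chX0 k : (0 < N)%N -> (ch ^+ k).[0] != 0.
Proof. by move=> N_gt0; rewrite horner_exp expf_neq0 // horner_ch0. Qed.

Lemma coef_euler_prod_even k n : (n < N)%N -> ~~ odd n ->
  (u ^+ k * euler_egf N ((k.+1%:R + 1) / 2))`_n =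
  (binom_comb k.+1 (fun i => 'C(k.+1, 2 * i)) (fun j => u ^+ (2 * j)))`_n.
Proof.
move=> lt_nN even_n; apply/eqP; rewrite -subr_eq0 -coefB; apply/eqP.
apply: (parity_coef_eq0 (N := N) (s := true) (c := ch ^+ k.+1)
  (q := sh * binom_part 1 k.+1 ch sh)) => //; last exact/negbTE.
- by rewrite chX_comp_polyNX.
- by rewrite horner_chX0 // (leq_ltn_trans (leq0n n)).
- rewrite rmorphM /= rmorph_binom_part /= sh_comp_polyNX ch_comp_polyNX.
  by rewrite binom_partN scaleN1r mulNr.
rewrite mulrBr linearB /= take_poly_ch_euler_prod take_poly_ch_binom_even.
by rewrite -linearB /= exprD_binom_part addrAC subrr add0r.
Qed.

Lemma coef_euler_prod_odd k n : (n < N)%N -> odd n ->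
  (u ^+ k * euler_egf N ((k.+1%:R + 1) / 2))`_n =
  (binom_comb k.+1 (fun i => 'C(k.+1, (2 * i).+1))
                   (fun j => u ^+ (2 * j) * euler_egf N 1))`_n.
Proof.
move=> lt_nN odd_n; apply/eqP; rewrite -subr_eq0 -coefB; apply/eqP.
apply: (parity_coef_eq0 (N := N) (s := false) (c := ch ^+ k.+1)
  (q := binom_part 0 k.+1 ch sh - ch * binom_part 1 k.+1 ch sh)) => //.
- by rewrite chX_comp_polyNX.
- by rewrite horner_chX0 // (leq_ltn_trans (leq0n n)).
- rewrite rmorphB rmorphM /= !rmorph_binom_part /= sh_comp_polyNX ch_comp_polyNX.
  by rewrite !binom_partN scale1r.
rewrite mulrBr linearB /= take_poly_ch_euler_prod take_poly_ch_binom_odd.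
by rewrite -linearB /= exprD_binom_part; congr (take_poly N _); ring.
Qed.

End EulerGF.

Theorem mainTheorem5 (k m : nat) (hk : (0 < k)%N) (hm : (0 < m)%N) :
  eulerM (2 * m)
    (fun l : 'I_k => if (val l == k.-1)%N then (k%:R + 1) / 2 else 2^-1)
  = \sum_(0 <= i < (k./2).+1)
      ('C(k, 2 * i))%:R *
      \sum_(0 <= j < i.+1)
        ('C(i, j))%:R * (-1) ^+ j * eulerM (2 * m) (fun _ : 'I_(2 * j) => 2^-1)
  /\
  eulerM (2 * m).+1
    (fun l : 'I_k => if (val l == k.-1)%N then (k%:R + 1) / 2 else 2^-1)
  = \sum_(0 <= i < (k./2).+1)
      ('C(k, (2 * i).+1))%:R *
      \sum_(0 <= j < i.+1)
        ('C(i, j))%:R * (-1) ^+ j *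
        eulerM (2 * m).+1
          (fun l : 'I_(2 * j).+1 => if (val l == 2 * j)%N then 1 else 2^-1).
Proof.
case: k hk => // k _; split.
- rewrite eulerM_coef big_ord_last_if coef_euler_prod_even ?oddM //.
  by apply: binom_comb_coef => j; rewrite eulerM_coef prodr_const card_ord.
- rewrite eulerM_coef big_ord_last_if coef_euler_prod_odd //= ?oddM //.
  by apply: binom_comb_coef => j; rewrite eulerM_coef big_ord_last_if.
Qed.
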